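(* Let $f:[0,1]\to\mathbb{R}$ and $g:[0,1]\to\mathbb{R}$ be (sufficiently regular) scalar functions and consider the linear SDE $dx = f(t)\,x\,dt + g(t)\,dw$ on $\mathbb{R}^d$, $t\in[0,1]$. Define $$\alpha_t = e^{\int_0^t f(\tau)\,d\tau},\quad \bar\alpha_t = e^{-\int_t^1 f(\tau)\,d\tau},\quad \sigma_t^2=\int_0^t \frac{g^2(\tau)}{\alpha_\tau^2}\,d\tau,\quad \bar\sigma_t^2=\int_t^1 \frac{g^2(\tau)}{\alpha_\tau^2}\,d\tau .$$ Fix $x_0,x_1\in\mathbb{R}^d$ and $\epsilon>0$, and let $p_{\text{target}}=\mathcal{N}(x_0,\epsilon^2 I)$ and $p_{\text{initial}}=\mathcal{N}(x_1,\alpha_1^2\epsilon^2 I)$. Set $$\sigma^2=\epsilon^2+\frac{\sqrt{\sigma_1^4+4\epsilon^4}-\sigma_1^2}{2},\qquad a = x_0+\frac{\sigma^2}{\sigma_1^2}\Big(x_0-\frac{x_1}{\alpha_1}\Big),\qquad b = x_1+\frac{\sigma^2}{\sigma_1^2}\big(x_1-\alpha_1 x_0\big).$$ Then the functions $$\widehat{\Psi}_t^{\epsilon}=\mathcal{N}\big(\alpha_t a,\ (\alpha_t^2\sigma^2+\alpha_t^2\sigma_t^2)I\big),\qquad \Psi_t^{\epsilon}=\mathcal{N}\big(\bar\alpha_t b,\ (\alpha_t^2\sigma^2+\alpha_t^2\bar\sigma_t^2)I\big),\qquad t\in[0,1],$$ solve the Schrödinger bridge system $$\frac{\partial \Psi}{\partial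 t}=-\nabla_x\Psi^{\top} (f(t)x)-\tfrac12\operatorname{Tr}\!\big(g(t)^2\nabla_x^2\Psi\big),\qquad \frac{\partial \widehat\Psi}{\partial t}=-\nabla_x\cdot\big(\widehat\Psi\, f(t)x\big)+\tfrac12\operatorname{Tr}\!\big(g(t)^2\nabla_x^2\widehat\Psi\big),$$ subject to $\Psi_0\widehat\Psi_0=p_{\text{target}}$ and $\Psi_1\widehat\Psi_1=p_{\text{initial}}$. Moreover, as $\epsilon\to 0$, $\widehat\Psi_t^{\epsilon}$ and $\Psi_t^{\epsilon}$ converge to $$\widehat\Psi_t=\mathcal{N}\big(\alpha_t x_0,\ \alpha_t^2\sigma_t^2 I\big),\qquad \Psi_t=\mathcal{N}\big(\bar\alpha_t x_1,\ \alpha_t^2\bar\sigma_t^2 I\big).$$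
   Context: $\mathcal{N}(\mu,\Sigma)$ denotes the Gaussian density with mean $\mu$ and covariance $\Sigma$; as usual for Schrödinger bridge potentials, $\Psi,\widehat\Psi$ are understood up to positive multiplicative constants, so the boundary identities $\Psi_0\widehat\Psi_0=p_{\text{target}}$, $\Psi_1\widehat\Psi_1=p_{\text{initial}}$ are equalities of densities after normalization. $w$ is a standard Brownian motion on $\mathbb{R}^d$ and $I$ the $d\times d$ identity. *)

From Stdlib Require Import Reals List.
From Coquelicot Require Import Coquelicot.
Open Scope R_scope.

(* Vectors of R^d are represented as functions nat -> R; only the
   coordinates i < d are ever used. *)
Definition vec := nat -> R.

Definition fsum (d : nat) (u : nat -> R) : R :=
  fold_right Rplus 0 (map u (seq 0 d)).

Definition vadd (x y : vec) : vec := fun i => x i + y i.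
Definition vsub (x y : vec) : vec := fun i => x i - y i.
Definition vscale (c : R) (x : vec) : vec := fun i => c * x i.

Definition upd (x : vec) (i : nat) (h : R) : vec :=
  fun j => if Nat.eqb j i then h else x j.

Definition sqnorm (d : nat) (x : vec) : R := fsum d (fun i => x i ^ 2).

Definition gauss (d : nat) (m : vec) (v : R) (x : vec) : R :=
  / Rpower (2 * PI * v) (INR d / 2) * exp (- sqnorm d (vsub x m) / (2 * v)).

Definition slice (F : vec -> R) (x : vec) (i : nat) : R -> R :=
  fun h => F (upd x i h).

Definition partial (F : vec -> R) (i : nat) (x : vec) : R :=
  Derive (slice F x i) (x i).
Definition partial2 (F : vec -> R) (i : nat) (x : vec) : R :=
  Derive_n (slice F x i) 2 (x i).

Definition solves_backward (d : nat) (f g : R -> R) (Psi : R -> vec -> R) : Prop :=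
  forall t, 0 < t < 1 -> forall x : vec,
    ex_derive (fun s => Psi s x) t /\
    (forall i, (i < d)%nat -> ex_derive_n (slice (Psi t) x i) 2 (x i)) /\
    Derive (fun s => Psi s x) t =
      - fsum d (fun i => partial (Psi t) i x * (f t * x i))
      - / 2 * fsum d (fun i => g t ^ 2 * partial2 (Psi t) i x).

Definition solves_forward (d : nat) (f g : R -> R) (Psih : R -> vec -> R) : Prop :=
  forall t, 0 < t < 1 -> forall x : vec,
    ex_derive (fun s => Psih s x) t /\
    (forall i, (i < d)%nat -> ex_derive_n (slice (Psih t) x i) 2 (x i)) /\
    (forall i, (i < d)%nat ->
       ex_derive (slice (fun y => Psih t y * (f t * y i)) x i) (x i)) /\
    Derive (fun s => Psih s x) t =
      - fsum d (fun i => partial (fun y => Psih t y * (f t * y i)) i x)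
      + / 2 * fsum d (fun i => g t ^ 2 * partial2 (Psih t) i x).

Definition alpha (f : R -> R) (t : R) : R := exp (RInt f 0 t).
Definition alphabar (f : R -> R) (t : R) : R := exp (- RInt f t 1).
Definition sig2 (f g : R -> R) (t : R) : R :=
  RInt (fun s => g s ^ 2 / alpha f s ^ 2) 0 t.
Definition sigbar2 (f g : R -> R) (t : R) : R :=
  RInt (fun s => g s ^ 2 / alpha f s ^ 2) t 1.

Definition sigma2 (f g : R -> R) (eps : R) : R :=
  eps ^ 2 + (sqrt (sig2 f g 1 ^ 2 + 4 * eps ^ 4) - sig2 f g 1) / 2.
Definition avec (f g : R -> R) (x0 x1 : vec) (eps : R) : vec :=
  vadd x0 (vscale (sigma2 f g eps / sig2 f g 1)
                  (vsub x0 (vscale (/ alpha f 1) x1))).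
Definition bvec (f g : R -> R) (x0 x1 : vec) (eps : R) : vec :=
  vadd x1 (vscale (sigma2 f g eps / sig2 f g 1)
                  (vsub x1 (vscale (alpha f 1) x0))).

Definition PsihatE (d : nat) (f g : R -> R) (x0 x1 : vec) (eps t : R) : vec -> R :=
  gauss d (vscale (alpha f t) (avec f g x0 x1 eps))
    (alpha f t ^ 2 * sigma2 f g eps + alpha f t ^ 2 * sig2 f g t).
Definition PsiE (d : nat) (f g : R -> R) (x0 x1 : vec) (eps t : R) : vec -> R :=
  gauss d (vscale (alphabar f t) (bvec f g x0 x1 eps))
    (alpha f t ^ 2 * sigma2 f g eps + alpha f t ^ 2 * sigbar2 f g t).

Definition Psihat0 (d : nat) (f g : R -> R) (x0 : vec) (t : R) : vec -> R :=
  gauss d (vscale (alpha f t) x0) (alpha f t ^ 2 * sig2 f g t).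
Definition Psi0 (d : nat) (f g : R -> R) (x1 : vec) (t : R) : vec -> R :=
  gauss d (vscale (alphabar f t) x1) (alpha f t ^ 2 * sigbar2 f g t).

(* A function exp (L t - |x - m t|^2 / (2 v t)) whose mean follows the drift,
   m' = f m, solves the backward equation when v' = 2 f v - g^2 and
   L' = d g^2 / (2 v), and the forward equation when v' = 2 f v + g^2 and
   L' = - d (f + g^2 / (2 v)).  Since alpha' = f alpha, sigma_t^2' = g^2 / alpha^2
   and sigmabar_t^2' = - g^2 / alpha^2, the variances alpha_t^2 (sigma^2 + sigmabar_t^2)
   of Psi and alpha_t^2 (sigma^2 + sigma_t^2) of Psihat satisfy these equations, and
   L = - (d/2) ln of the variance (up to the factor alpha_t^2 for Psi) fixes the
   time-dependent normalisation.
   The product of two Gaussian kernels is a Gaussian whose precision is the sum of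
   the precisions and whose mean is the precision-weighted mean.  The constant
   sigma^2 is the positive root of 1/sigma^2 + 1/(sigma^2 + sigma_1^2) = 1/eps^2,
   and with it the choice of a and b makes the precision-weighted means equal to
   x0 at t = 0 and x1 at t = 1.
   As eps -> 0, sigma^2 -> 0 continuously, so a -> x0, b -> x1 and the densities
   converge pointwise.
   Because f and g are only continuous on [0, 1], the fundamental theorem of
   calculus is applied to their compositions with a continuous retraction of R
   onto [0, 1], which leave alpha, sigma_t^2, ... unchanged on [0, 1]. *)

From Stdlib Require Import Reals Lra Lia List FunctionalExtensionality.
From Coquelicot Require Import Coquelicot.
Open Scope R_scope.

Lemma fsum_S d u : fsum (S d) u = fsum d u + u d.
Proof.
  unfold fsum. rewrite seq_S, map_app, fold_right_app. simpl.
  generalize (u d). induction (map u (seq 0 d)) as [|a l IH]; intro r; simpl.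
  - ring.
  - rewrite IH. ring.
Qed.

Lemma fsum_ext d u w : (forall i, (i < d)%nat -> u i = w i) -> fsum d u = fsum d w.
Proof.
  induction d as [|d IH]; intros hu; [reflexivity|].
  rewrite !fsum_S, IH, hu; [reflexivity|lia|intros; apply hu; lia].
Qed.

Lemma fsum_affine d a b c u w :
  fsum d (fun i => a + b * u i + c * w i) = INR d * a + b * fsum d u + c * fsum d w.
Proof.
  induction d as [|d IH]; [unfold fsum; simpl; ring|].
  rewrite !fsum_S, IH, S_INR. ring.
Qed.

Lemma fsum_linear d b c u w :
  fsum d (fun i => b * u i + c * w i) = b * fsum d u + c * fsum d w.
Proof.
  rewrite <- (Rplus_0_l (b * _)), <- (Rmult_0_r (INR d)), <- fsum_affine.
  apply fsum_ext. intros. ring.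
Qed.

Lemma fsum_scal d b u : fsum d (fun i => b * u i) = b * fsum d u.
Proof.
  rewrite <- (Rplus_0_r (b * _)), <- (Rmult_0_l (fsum d u)), <- fsum_linear.
  apply fsum_ext. intros. ring.
Qed.

Lemma fsum_upd d i u a : (i < d)%nat ->
  fsum d (fun j => if Nat.eqb j i then a else u j) = fsum d u - u i + a.
Proof.
  induction d as [|d IH]; intros hi; [lia|].
  rewrite !fsum_S. destruct (Nat.eqb_spec d i) as [->|hne].
  - rewrite (fsum_ext i _ u); [ring|].
    intros j hj. destruct (Nat.eqb_spec j i); [lia|reflexivity].
  - rewrite IH by lia. ring.
Qed.

Lemma is_derive_fsum d (u : R -> nat -> R) u' t :
  (forall i, (i < d)%nat -> is_derive (fun s => u s i) t (u' i)) ->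
  is_derive (fun s => fsum d (u s)) t (fsum d u').
Proof.
  induction d as [|d IH]; intros hu.
  - apply (is_derive_const 0).
  - rewrite fsum_S.
    apply (is_derive_ext (fun s => fsum d (u s) + u s d)); [intros; now rewrite fsum_S|].
    apply (is_derive_plus (fun s => fsum d (u s)) (fun s => u s d)).
    + apply IH. intros. apply hu. lia.
    + apply hu. lia.
Qed.

Lemma continuous_fsum d (u : R -> nat -> R) t :
  (forall i, (i < d)%nat -> continuous (fun s => u s i) t) ->
  continuous (fun s => fsum d (u s)) t.
Proof.
  induction d as [|d IH]; intros hu.
  - apply continuous_const.
  - apply (continuous_ext (fun s => fsum d (u s) + u s d)); [intros; now rewrite fsum_S|].
    apply (continuous_plus (fun s => fsum d (u s)) (fun s => u s d)).
    + apply IH. intros. apply hu. lia.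
    + apply hu. lia.
Qed.

Lemma is_derive_eq (h : R -> R) t l l' : is_derive h t l -> l = l' -> is_derive h t l'.
Proof. now intros H <-. Qed.

Lemma is_derive_ext_R (h k : R -> R) t l :
  (forall s, h s = k s) -> is_derive h t l -> is_derive k t l.
Proof. apply is_derive_ext. Qed.

Lemma ex_derive_continuous_R (h : R -> R) x : ex_derive h x -> continuous h x.
Proof. apply (@ex_derive_continuous R_AbsRing R_NormedModule). Qed.

Lemma Rpower_pos a b : 0 < Rpower a b.
Proof. apply exp_pos. Qed.

Lemma is_derive_RInt_upper (h : R -> R) a t :
  (forall s, continuous h s) -> is_derive (fun s => RInt h a s) t (h t).
Proof.
  intros hc. apply (is_derive_RInt h _ a); [|apply hc].
  apply filter_forall. intros s.
  apply (@RInt_correct R_CompleteNormedModule), ex_RInt_continuous. auto.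
Qed.

Lemma is_derive_RInt_lower (h : R -> R) b t :
  (forall s, continuous h s) -> is_derive (fun s => RInt h s b) t (- h t).
Proof.
  intros hc. apply (is_derive_RInt' h _ t b); [|apply hc].
  apply filter_forall. intros s.
  apply (@RInt_correct R_CompleteNormedModule), ex_RInt_continuous. auto.
Qed.

Lemma is_derive_ext_on01 (F G : R -> R) t l :
  (forall s, 0 <= s <= 1 -> F s = G s) -> 0 < t < 1 -> is_derive G t l -> is_derive F t l.
Proof.
  intros hFG ht. apply is_derive_ext_loc.
  apply (locally_interval _ t 0 1); simpl; try lra.
  intros s h0 h1. symmetry. apply hFG. lra.
Qed.

Lemma filterlim_at_right_0 (F : R -> R) :
  continuous F 0 -> filterlim F (at_right 0) (locally (F 0)).
Proof. intros hF. eapply filterlim_filter_le_1; [apply filter_le_within|exact hF]. Qed.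

(** * Gaussian kernels *)

Definition gauss_kernel (d : nat) (L : R) (m : vec) (v : R) (x : vec) : R :=
  exp (L - sqnorm d (vsub x m) / (2 * v)).

Definition exp_quad (c mu v h : R) : R := exp (c - (h - mu) ^ 2 / (2 * v)).

(* [auto_derive] writes the exponent in its own syntactic form; normalising both
   sides makes the two [exp] atoms identical for [field]. *)
Ltac exp_field := unfold Rminus, Rdiv; simpl pow; repeat rewrite ?Rmult_1_r, ?Rmult_1_l; field.

Section ExpQuad.
Variables (c mu v : R).
Hypothesis hv : v <> 0.

Lemma is_derive_exp_quad h :
  is_derive (exp_quad c mu v) h (exp_quad c mu v h * (- (h - mu) / v)).
Proof. unfold exp_quad. auto_derive; [easy|]. exp_field. exact hv. Qed.

Lemma Derive_exp_quad :
  Derive (exp_quad c mu v) = fun h => exp_quad c mu v h * (- (h - mu) / v).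
Proof.
  apply functional_extensionality. intro h.
  apply is_derive_unique, is_derive_exp_quad.
Qed.

Lemma is_derive2_exp_quad h :
  is_derive (Derive (exp_quad c mu v)) h
    (exp_quad c mu v h * ((h - mu) ^ 2 / v ^ 2 - 1 / v)).
Proof. rewrite Derive_exp_quad. unfold exp_quad. auto_derive; [easy|]. exp_field. exact hv. Qed.

Lemma is_derive_exp_quad_flux k h :
  is_derive (fun h => exp_quad c mu v h * (k * h)) h
    (k * exp_quad c mu v h + k * h * (exp_quad c mu v h * (- (h - mu) / v))).
Proof. unfold exp_quad. auto_derive; [easy|]. exp_field. exact hv. Qed.

End ExpQuad.

Section KernelSpace.
Variables (d : nat) (L : R) (m : vec) (v : R) (x : vec) (i : nat).
Hypotheses (hi : (i < d)%nat) (hv : v <> 0).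

Let c := L - (sqnorm d (vsub x m) - (x i - m i) ^ 2) / (2 * v).

Lemma slice_gauss_kernel : slice (gauss_kernel d L m v) x i = exp_quad c (m i) v.
Proof.
  apply functional_extensionality. intro h.
  unfold slice, gauss_kernel, exp_quad, c, sqnorm.
  rewrite (fsum_ext d _ (fun j => if Nat.eqb j i then (h - m i) ^ 2 else vsub x m j ^ 2)).
  - rewrite fsum_upd by exact hi. unfold vsub. f_equal. field. exact hv.
  - intros j _. unfold vsub, upd. now destruct (Nat.eqb_spec j i) as [->|].
Qed.

Lemma slice_gauss_kernel_flux k :
  slice (fun y => gauss_kernel d L m v y * (k * y i)) x i =
  fun h => exp_quad c (m i) v h * (k * h).
Proof.
  apply functional_extensionality. intro h.
  change (slice (gauss_kernel d L m v) x i h * (k * upd x i h i) = exp_quad c (m i) v h * (k * h)).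
  rewrite slice_gauss_kernel. unfold upd. now rewrite Nat.eqb_refl.
Qed.

Lemma slice_gauss_kernel_base : exp_quad c (m i) v (x i) = gauss_kernel d L m v x.
Proof. unfold exp_quad, gauss_kernel, c. f_equal. field. exact hv. Qed.

Lemma partial_gauss_kernel :
  partial (gauss_kernel d L m v) i x = gauss_kernel d L m v x * (- (x i - m i) / v).
Proof.
  unfold partial. rewrite slice_gauss_kernel.
  rewrite (is_derive_unique _ _ _ (is_derive_exp_quad _ _ _ hv _)).
  now rewrite slice_gauss_kernel_base.
Qed.

Lemma ex_derive2_gauss_kernel : ex_derive_n (slice (gauss_kernel d L m v) x i) 2 (x i).
Proof. rewrite slice_gauss_kernel. eexists. now apply is_derive2_exp_quad. Qed.

Lemma partial2_gauss_kernel :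
  partial2 (gauss_kernel d L m v) i x =
  gauss_kernel d L m v x * ((x i - m i) ^ 2 / v ^ 2 - 1 / v).
Proof.
  unfold partial2. rewrite slice_gauss_kernel. simpl.
  rewrite (is_derive_unique _ _ _ (is_derive2_exp_quad _ _ _ hv _)).
  now rewrite slice_gauss_kernel_base.
Qed.

Lemma ex_derive_gauss_kernel_flux k :
  ex_derive (slice (fun y => gauss_kernel d L m v y * (k * y i)) x i) (x i).
Proof. rewrite slice_gauss_kernel_flux. eexists. now apply is_derive_exp_quad_flux. Qed.

Lemma partial_gauss_kernel_flux k :
  partial (fun y => gauss_kernel d L m v y * (k * y i)) i x =
  k * gauss_kernel d L m v x + k * x i * (gauss_kernel d L m v x * (- (x i - m i) / v)).
Proof.
  unfold partial. rewrite slice_gauss_kernel_flux.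
  rewrite (is_derive_unique _ _ _ (is_derive_exp_quad_flux _ _ _ hv _ _)).
  now rewrite slice_gauss_kernel_base.
Qed.

End KernelSpace.

Lemma is_derive_gauss_kernel_time d L m v L' m' v' x t :
  is_derive L t L' ->
  (forall i, (i < d)%nat -> is_derive (fun s => m s i) t (m' i)) ->
  is_derive v t v' -> v t <> 0 ->
  is_derive (fun s => gauss_kernel d (L s) (m s) (v s) x) t
    (gauss_kernel d (L t) (m t) (v t) x *
     (L' + fsum d (fun i => (x i - m t i) * m' i) / v t
         + sqnorm d (vsub x (m t)) * v' / (2 * v t ^ 2))).
Proof.
  intros hL hm hv hv0.
  assert (hS : is_derive (fun s => sqnorm d (vsub x (m s))) t
                 (fsum d (fun i => -2 * ((x i - m t i) * m' i)))).
  { apply is_derive_fsum. intros i hi. unfold vsub.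
    eapply is_derive_eq.
    - apply (is_derive_comp (fun y => (x i - y) ^ 2) (fun s => m s i)); [|now apply hm].
      auto_derive; [easy|reflexivity].
    - unfold scal; simpl. unfold mult; simpl. ring. }
  unfold gauss_kernel. eapply is_derive_eq.
  - apply (is_derive_comp exp (fun s => L s - sqnorm d (vsub x (m s)) / (2 * v s))).
    + apply is_derive_exp.
    + apply (is_derive_minus L), is_derive_div; [exact hL|exact hS| |lra].
      apply (is_derive_scal v). exact hv.
  - rewrite fsum_scal.
    simpl. unfold scal, minus, plus, opp, mult; simpl. unfold mult; simpl. field. exact hv0.
Qed.

Section KernelPDE.
Variables (d : nat) (f g L : R -> R) (m : R -> vec) (v : R -> R).
Hypothesis v_pos : forall t, 0 < t < 1 -> 0 < v t.
Hypothesis mean_flow : forall t i, 0 < t < 1 -> is_derive (fun s => m s i) t (f t * m t i).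

Let K t := gauss_kernel d (L t) (m t) (v t).

Lemma gauss_kernel_solves_backward :
  (forall t, 0 < t < 1 -> is_derive L t (INR d * (g t ^ 2 / (2 * v t)))) ->
  (forall t, 0 < t < 1 -> is_derive v t (2 * f t * v t - g t ^ 2)) ->
  solves_backward d f g K.
Proof.
  intros hL hv t ht x. unfold K.
  assert (hv0 : v t <> 0) by (specialize (v_pos t ht); lra).
  pose proof (is_derive_gauss_kernel_time d L m v _ (fun i => f t * m t i) _ x t
                (hL t ht) (fun i _ => mean_flow t i ht) (hv t ht) hv0) as hK.
  split; [eexists; exact hK|].
  split; [intros i hi; now apply ex_derive2_gauss_kernel|].
  erewrite is_derive_unique; [|exact hK].
  set (P := gauss_kernel d (L t) (m t) (v t) x).
  rewrite (fsum_ext d (fun i => partial _ i x * _)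
             (fun i => P * (- (x i - m t i) / v t) * (f t * x i)))
    by (intros; now rewrite partial_gauss_kernel).
  rewrite (fsum_ext d (fun i => g t ^ 2 * _)
             (fun i => g t ^ 2 * (P * ((x i - m t i) ^ 2 / v t ^ 2 - 1 / v t))))
    by (intros; now rewrite partial2_gauss_kernel).
  transitivity (fsum d (fun i => P * (g t ^ 2 / (2 * v t))
      + (P / v t) * ((x i - m t i) * (f t * m t i))
      + (P * (2 * f t * v t - g t ^ 2) / (2 * v t ^ 2)) * (vsub x (m t) i ^ 2))).
  - rewrite fsum_affine. unfold sqnorm. field. exact hv0.
  - transitivity (fsum d (fun i => -1 * (P * (- (x i - m t i) / v t) * (f t * x i))
      + (- / 2) * (g t ^ 2 * (P * ((x i - m t i) ^ 2 / v t ^ 2 - 1 / v t))))).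
    + apply fsum_ext. intros. unfold vsub. field. exact hv0.
    + rewrite fsum_linear. ring.
Qed.

Lemma gauss_kernel_solves_forward :
  (forall t, 0 < t < 1 -> is_derive L t (INR d * (- f t - g t ^ 2 / (2 * v t)))) ->
  (forall t, 0 < t < 1 -> is_derive v t (2 * f t * v t + g t ^ 2)) ->
  solves_forward d f g K.
Proof.
  intros hL hv t ht x. unfold K.
  assert (hv0 : v t <> 0) by (specialize (v_pos t ht); lra).
  pose proof (is_derive_gauss_kernel_time d L m v _ (fun i => f t * m t i) _ x t
                (hL t ht) (fun i _ => mean_flow t i ht) (hv t ht) hv0) as hK.
  split; [eexists; exact hK|].
  split; [intros i hi; now apply ex_derive2_gauss_kernel|].
  split; [intros i hi; now apply ex_derive_gauss_kernel_flux|].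
  erewrite is_derive_unique; [|exact hK].
  set (P := gauss_kernel d (L t) (m t) (v t) x).
  rewrite (fsum_ext d (fun i => partial _ i x)
             (fun i => f t * P + f t * x i * (P * (- (x i - m t i) / v t))))
    by (intros; now rewrite partial_gauss_kernel_flux).
  rewrite (fsum_ext d (fun i => g t ^ 2 * _)
             (fun i => g t ^ 2 * (P * ((x i - m t i) ^ 2 / v t ^ 2 - 1 / v t))))
    by (intros; now rewrite partial2_gauss_kernel).
  transitivity (fsum d (fun i => P * (- f t - g t ^ 2 / (2 * v t))
      + (P / v t) * ((x i - m t i) * (f t * m t i))
      + (P * (2 * f t * v t + g t ^ 2) / (2 * v t ^ 2)) * (vsub x (m t) i ^ 2))).
  - rewrite fsum_affine. unfold sqnorm. field. exact hv0.
  - transitivity (fsum d (fun i => -1 * (f t * P + f t * x i * (P * (- (x i - m t i) / v t)))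
      + / 2 * (g t ^ 2 * (P * ((x i - m t i) ^ 2 / v t ^ 2 - 1 / v t))))).
    + apply fsum_ext. intros. unfold vsub. field. exact hv0.
    + rewrite fsum_linear. ring.
Qed.

End KernelPDE.

Lemma gauss_rescale d L m v x :
  Rpower (2 * PI * v) (INR d / 2) * exp L * gauss d m v x = gauss_kernel d L m v x.
Proof.
  unfold gauss, gauss_kernel. unfold Rminus. rewrite exp_plus.
  unfold Rdiv. rewrite Ropp_mult_distr_l. field. apply Rgt_not_eq, Rpower_pos.
Qed.

Lemma gauss_kernel_mul d L1 L2 m1 m2 v1 v2 m e :
  0 < v1 -> 0 < v2 -> 0 < e -> / v1 + / v2 = / e ->
  (forall i, m1 i / v1 + m2 i / v2 = m i / e) ->
  exists k, 0 < k /\ forall x,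
    gauss_kernel d L1 m1 v1 x * gauss_kernel d L2 m2 v2 x = k * gauss d m e x.
Proof.
  intros h1 h2 he hprec hmean.
  set (c i := m i ^ 2 / (2 * e) - m1 i ^ 2 / (2 * v1) - m2 i ^ 2 / (2 * v2)).
  exists (Rpower (2 * PI * e) (INR d / 2) * exp (L1 + L2 + fsum d c)).
  split; [apply Rmult_lt_0_compat; [apply Rpower_pos|apply exp_pos]|].
  intros x. rewrite gauss_rescale. unfold gauss_kernel. rewrite <- exp_plus. f_equal.
  unfold sqnorm.
  transitivity (L1 + L2 + fsum d (fun i => (- / (2 * v1)) * (vsub x m1 i ^ 2)
                                        + (- / (2 * v2)) * (vsub x m2 i ^ 2))).
  { rewrite fsum_linear. field. lra. }
  transitivity (L1 + L2 + fsum d (fun i => 1 * c i + (- / (2 * e)) * (vsub x m i ^ 2))).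
  2: { rewrite fsum_linear. field. lra. }
  f_equal. apply fsum_ext. intros i _. unfold vsub, c.
  (* the x_i^2 and x_i terms cancel by the precision and mean identities *)
  apply Rminus_diag_uniq.
  transitivity (- x i ^ 2 / 2 * (/ v1 + / v2 - / e) + x i * (m1 i / v1 + m2 i / v2 - m i / e)).
  { field. lra. }
  rewrite hprec, hmean. ring.
Qed.

Lemma continuous_gauss_param d (m : R -> vec) (v : R -> R) x s0 :
  (forall i, (i < d)%nat -> continuous (fun s => m s i) s0) -> continuous v s0 -> 0 < v s0 ->
  continuous (fun s => gauss d (m s) (v s) x) s0.
Proof.
  intros hm hv hv0. unfold gauss.
  apply (continuous_mult (fun s => / Rpower (2 * PI * v s) (INR d / 2))
                         (fun s => exp (- sqnorm d (vsub x (m s)) / (2 * v s)))).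
  - apply (continuous_comp v (fun y => / Rpower (2 * PI * y) (INR d / 2))); [exact hv|].
    apply ex_derive_continuous_R. unfold Rpower. auto_derive.
    pose proof PI_RGT_0. split; [nra|]. split; [apply Rgt_not_eq, exp_pos|easy].
  - apply (continuous_comp (fun s => - sqnorm d (vsub x (m s)) / (2 * v s)) exp);
      [|apply ex_derive_continuous_R; eexists; apply is_derive_exp].
    apply (continuous_mult (fun s => - sqnorm d (vsub x (m s))) (fun s => / (2 * v s))).
    + apply (continuous_opp (fun s => sqnorm d (vsub x (m s)))).
      apply (continuous_fsum d (fun s i => vsub x (m s) i ^ 2)). intros i hi. unfold vsub.
      apply (continuous_comp (fun s => m s i) (fun y => (x i - y) ^ 2)); [now apply hm|].
      apply ex_derive_continuous_R. auto_derive. easy.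
    + apply (continuous_comp v (fun y => / (2 * y))); [exact hv|].
      apply ex_derive_continuous_R. auto_derive. lra.
Qed.

(** * Coefficients of the linear SDE *)

Lemma alpha_pos f t : 0 < alpha f t.
Proof. apply exp_pos. Qed.

Lemma sde_weight_nonneg f g s : 0 <= g s ^ 2 / alpha f s ^ 2.
Proof.
  apply Rmult_le_pos; [apply pow2_ge_0|].
  apply Rlt_le, Rinv_0_lt_compat, pow_lt, alpha_pos.
Qed.

Section GlobalCoefficients.
Variables f g : R -> R.
Hypotheses (hf : forall t, continuous f t) (hg : forall t, continuous g t).

Lemma is_derive_alpha t : is_derive (alpha f) t (f t * alpha f t).
Proof.
  apply (is_derive_comp exp (RInt f 0)); [apply is_derive_exp|].
  now apply is_derive_RInt_upper.
Qed.

Lemma is_derive_alphabar t : is_derive (alphabar f) t (f t * alphabar f t).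
Proof.
  eapply is_derive_eq.
  - apply (is_derive_comp exp (fun s => - RInt f s 1)); [apply is_derive_exp|].
    apply (is_derive_opp (fun s => RInt f s 1)). now apply is_derive_RInt_lower.
  - unfold scal, opp; simpl. unfold mult; simpl. unfold alphabar. ring.
Qed.

Lemma continuous_sde_weight s : continuous (fun s => g s ^ 2 / alpha f s ^ 2) s.
Proof.
  apply (continuous_mult (fun s => g s ^ 2) (fun s => / alpha f s ^ 2)).
  - apply (continuous_comp g (fun y => y ^ 2)); [apply hg|].
    apply ex_derive_continuous_R. auto_derive. easy.
  - apply (continuous_comp (alpha f) (fun y => / y ^ 2)).
    + apply ex_derive_continuous_R. eexists. apply is_derive_alpha.
    + apply ex_derive_continuous_R. auto_derive.
      pose proof (alpha_pos f s). nra.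
Qed.

Lemma is_derive_sig2 t : is_derive (sig2 f g) t (g t ^ 2 / alpha f t ^ 2).
Proof.
  apply (is_derive_RInt_upper (fun s => g s ^ 2 / alpha f s ^ 2)), continuous_sde_weight.
Qed.

Lemma is_derive_sigbar2 t : is_derive (sigbar2 f g) t (- (g t ^ 2 / alpha f t ^ 2)).
Proof.
  apply (is_derive_RInt_lower (fun s => g s ^ 2 / alpha f s ^ 2)), continuous_sde_weight.
Qed.

Lemma sig2_nonneg t : 0 <= t -> 0 <= sig2 f g t.
Proof.
  intros ht. apply RInt_ge_0; [exact ht| |intros; apply sde_weight_nonneg].
  apply (@ex_RInt_continuous R_CompleteNormedModule). intros. apply continuous_sde_weight.
Qed.

Lemma sigbar2_nonneg t : t <= 1 -> 0 <= sigbar2 f g t.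
Proof.
  intros ht. apply RInt_ge_0; [exact ht| |intros; apply sde_weight_nonneg].
  apply (@ex_RInt_continuous R_CompleteNormedModule). intros. apply continuous_sde_weight.
Qed.

End GlobalCoefficients.

Definition clamp01 (s : R) : R := (Rabs s - Rabs (s - 1) + 1) / 2.

Lemma clamp01_id s : 0 <= s <= 1 -> clamp01 s = s.
Proof.
  intros hs. unfold clamp01. rewrite Rabs_right, Rabs_left1 by lra. field.
Qed.

Lemma clamp01_range s : 0 <= clamp01 s <= 1.
Proof.
  unfold clamp01. destruct (Rle_dec 0 s), (Rle_dec 1 s).
  - rewrite Rabs_right, (Rabs_right (s - 1)) by lra. lra.
  - rewrite Rabs_right, (Rabs_left1 (s - 1)) by lra. lra.
  - lra.
  - rewrite Rabs_left1, (Rabs_left1 (s - 1)) by lra. lra.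
Qed.

Lemma continuous_clamp01 s : continuous clamp01 s.
Proof.
  apply (continuous_mult (fun s => Rabs s - Rabs (s - 1) + 1) (fun _ => / 2));
    [|apply continuous_const].
  apply (continuous_plus (fun s => Rabs s - Rabs (s - 1)) (fun _ => 1));
    [|apply continuous_const].
  apply (continuous_minus Rabs (fun s => Rabs (s - 1))); [apply continuous_Rabs|].
  apply (continuous_comp (fun s => s - 1) Rabs); [|apply continuous_Rabs].
  apply (continuous_minus (fun s => s) (fun _ => 1)); [apply continuous_id|apply continuous_const].
Qed.

Lemma continuous_comp_clamp01 (h : R -> R) :
  (forall t, 0 <= t <= 1 -> continuous h t) -> forall s, continuous (fun s => h (clamp01 s)) s.
Proof.
  intros hh s. apply (continuous_comp clamp01 h); [apply continuous_clamp01|].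
  apply hh, clamp01_range.
Qed.

Lemma between01 a b s : 0 <= a <= 1 -> 0 <= b <= 1 -> Rmin a b < s < Rmax a b -> 0 <= s <= 1.
Proof. intros ha hb. unfold Rmin, Rmax. destruct (Rle_dec a b); lra. Qed.

Lemma RInt_comp_clamp01 (h : R -> R) a b : 0 <= a <= 1 -> 0 <= b <= 1 ->
  RInt h a b = RInt (fun s => h (clamp01 s)) a b.
Proof.
  intros ha hb. apply RInt_ext. intros s hs.
  now rewrite clamp01_id by exact (between01 a b s ha hb hs).
Qed.

Section CoefficientsOn01.
Variables f g : R -> R.
Let fc (s : R) : R := f (clamp01 s).
Let gc (s : R) : R := g (clamp01 s).

Lemma alpha_comp_clamp01 t : 0 <= t <= 1 -> alpha f t = alpha fc t.
Proof. intros ht. unfold alpha. rewrite RInt_comp_clamp01 by lra. reflexivity. Qed.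

Lemma alphabar_comp_clamp01 t : 0 <= t <= 1 -> alphabar f t = alphabar fc t.
Proof. intros ht. unfold alphabar. rewrite RInt_comp_clamp01 by lra. reflexivity. Qed.

Lemma sde_weight_comp_clamp01 a b : 0 <= a <= 1 -> 0 <= b <= 1 ->
  RInt (fun s => g s ^ 2 / alpha f s ^ 2) a b = RInt (fun s => gc s ^ 2 / alpha fc s ^ 2) a b.
Proof.
  intros ha hb. apply RInt_ext. intros s hs.
  pose proof (between01 a b s ha hb hs) as h01.
  unfold gc. rewrite clamp01_id, alpha_comp_clamp01 by exact h01. reflexivity.
Qed.

Lemma sig2_comp_clamp01 t : 0 <= t <= 1 -> sig2 f g t = sig2 fc gc t.
Proof. intros ht. apply sde_weight_comp_clamp01; lra. Qed.

Lemma sigbar2_comp_clamp01 t : 0 <= t <= 1 -> sigbar2 f g t = sigbar2 fc gc t.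
Proof. intros ht. apply sde_weight_comp_clamp01; lra. Qed.

Hypotheses (hf : forall t, 0 <= t <= 1 -> continuous f t)
           (hg : forall t, 0 <= t <= 1 -> continuous g t).

Let hfc := continuous_comp_clamp01 f hf.
Let hgc := continuous_comp_clamp01 g hg.

Lemma is_derive_alpha_interior t : 0 < t < 1 -> is_derive (alpha f) t (f t * alpha f t).
Proof.
  intros ht. apply (is_derive_ext_on01 _ (alpha fc)); [exact alpha_comp_clamp01|exact ht|].
  rewrite alpha_comp_clamp01 by lra.
  replace (f t) with (fc t) by (unfold fc; now rewrite clamp01_id by lra).
  now apply is_derive_alpha.
Qed.

Lemma is_derive_alphabar_interior t :
  0 < t < 1 -> is_derive (alphabar f) t (f t * alphabar f t).
Proof.
  intros ht. apply (is_derive_ext_on01 _ (alphabar fc)); [exact alphabar_comp_clamp01|exact ht|].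
  rewrite alphabar_comp_clamp01 by lra.
  replace (f t) with (fc t) by (unfold fc; now rewrite clamp01_id by lra).
  now apply is_derive_alphabar.
Qed.

Lemma is_derive_sig2_interior t :
  0 < t < 1 -> is_derive (sig2 f g) t (g t ^ 2 / alpha f t ^ 2).
Proof.
  intros ht. apply (is_derive_ext_on01 _ (sig2 fc gc)); [exact sig2_comp_clamp01|exact ht|].
  rewrite alpha_comp_clamp01 by lra.
  replace (g t) with (gc t) by (unfold gc; now rewrite clamp01_id by lra).
  now apply is_derive_sig2.
Qed.

Lemma is_derive_sigbar2_interior t :
  0 < t < 1 -> is_derive (sigbar2 f g) t (- (g t ^ 2 / alpha f t ^ 2)).
Proof.
  intros ht. apply (is_derive_ext_on01 _ (sigbar2 fc gc)); [exact sigbar2_comp_clamp01|exact ht|].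
  rewrite alpha_comp_clamp01 by lra.
  replace (g t) with (gc t) by (unfold gc; now rewrite clamp01_id by lra).
  now apply is_derive_sigbar2.
Qed.

Lemma sig2_nonneg_01 t : 0 <= t <= 1 -> 0 <= sig2 f g t.
Proof.
  intros ht. rewrite sig2_comp_clamp01 by exact ht. apply (sig2_nonneg fc gc hfc hgc). lra.
Qed.

Lemma sigbar2_nonneg_01 t : 0 <= t <= 1 -> 0 <= sigbar2 f g t.
Proof.
  intros ht. rewrite sigbar2_comp_clamp01 by exact ht. apply (sigbar2_nonneg fc gc hfc hgc). lra.
Qed.

End CoefficientsOn01.

Lemma alpha_0 f : alpha f 0 = 1.
Proof. unfold alpha. rewrite RInt_point. apply exp_0. Qed.

Lemma alphabar_0 f : alphabar f 0 = / alpha f 1.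
Proof. apply exp_Ropp. Qed.

Lemma alphabar_1 f : alphabar f 1 = 1.
Proof.
  unfold alphabar. rewrite RInt_point. change (zero : R) with 0. rewrite Ropp_0. apply exp_0.
Qed.

Lemma sig2_0 f g : sig2 f g 0 = 0.
Proof. unfold sig2. now rewrite RInt_point. Qed.

Lemma sigbar2_0 f g : sigbar2 f g 0 = sig2 f g 1.
Proof. reflexivity. Qed.

Lemma sigbar2_1 f g : sigbar2 f g 1 = 0.
Proof. unfold sigbar2. now rewrite RInt_point. Qed.

(** * The bridge potentials *)

Lemma sigma2_pos f g eps : 0 < sig2 f g 1 -> 0 < eps -> 0 < sigma2 f g eps.
Proof.
  intros hS he. unfold sigma2. set (S := sig2 f g 1) in *.
  assert (hsqrt : S < sqrt (S ^ 2 + 4 * eps ^ 4)).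
  { pose proof (pow_lt eps 4 he). pose proof (pow2_ge_0 S).
    rewrite <- (sqrt_pow2 S) at 1 by lra. apply sqrt_lt_1; lra. }
  pose proof (pow_lt eps 2 he). lra.
Qed.

Lemma sigma2_precision f g eps : 0 < sig2 f g 1 -> 0 < eps ->
  / sigma2 f g eps + / (sigma2 f g eps + sig2 f g 1) = / eps ^ 2.
Proof.
  intros hS he.
  assert (hroot : eps ^ 2 * (2 * sigma2 f g eps + sig2 f g 1)
                  = sigma2 f g eps * (sigma2 f g eps + sig2 f g 1)).
  { unfold sigma2. set (S := sig2 f g 1) in *.
    assert (hdisc : 0 <= S ^ 2 + 4 * eps ^ 4)
      by (pose proof (pow2_ge_0 S); pose proof (pow_lt eps 4 he); lra).
    pose proof (sqrt_sqrt _ hdisc). nra. }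
  pose proof (sigma2_pos f g eps hS he) as hs.
  set (s := sigma2 f g eps) in *. set (S := sig2 f g 1) in *.
  replace (eps ^ 2) with (s * (s + S) / (2 * s + S)).
  - field. lra.
  - apply (Rmult_eq_reg_r (2 * s + S)); [rewrite <- hroot; field|]; lra.
Qed.

Lemma precision_weighted_mean s S e u y : 0 < s -> 0 < S -> / s + / (s + S) = / e ->
  (u + s / S * (u - y)) / s + (y + s / S * (y - u)) / (s + S) = u / e.
Proof.
  intros hs hS hprec.
  transitivity (u * (/ s + / (s + S))); [field; lra|].
  rewrite hprec. unfold Rdiv. ring.
Qed.

Lemma sigma2_at_0 f g : 0 < sig2 f g 1 -> sigma2 f g 0 = 0.
Proof.
  intros hS. unfold sigma2.
  replace (sig2 f g 1 ^ 2 + 4 * 0 ^ 4) with (sig2 f g 1 ^ 2) by ring.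
  rewrite sqrt_pow2 by lra. field.
Qed.

Lemma continuous_sigma2 f g : 0 < sig2 f g 1 -> continuous (sigma2 f g) 0.
Proof. intros hS. apply ex_derive_continuous_R. unfold sigma2. auto_derive. nra. Qed.

Section Bridge.
Variables (d : nat) (f g : R -> R) (x0 x1 : vec) (eps : R).
Hypotheses (hf : forall t, 0 <= t <= 1 -> continuous f t)
           (hg : forall t, 0 <= t <= 1 -> continuous g t)
           (hsig : 0 < sig2 f g 1) (heps : 0 < eps).

Definition Psi_var t := alpha f t ^ 2 * sigma2 f g eps + alpha f t ^ 2 * sigbar2 f g t.
Definition Psihat_var t := alpha f t ^ 2 * sigma2 f g eps + alpha f t ^ 2 * sig2 f g t.
Definition Psi_mean t := vscale (alphabar f t) (bvec f g x0 x1 eps).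
Definition Psihat_mean t := vscale (alpha f t) (avec f g x0 x1 eps).

Definition Psi_logscale t := - (INR d / 2) * ln (sigma2 f g eps + sigbar2 f g t).
Definition Psihat_logscale t := - (INR d / 2) * ln (Psihat_var t).

Definition Psi_scale t := Rpower (2 * PI * Psi_var t) (INR d / 2) * exp (Psi_logscale t).
Definition Psihat_scale t :=
  Rpower (2 * PI * Psihat_var t) (INR d / 2) * exp (Psihat_logscale t).

Lemma Psi_scale_pos t : 0 < Psi_scale t.
Proof. apply Rmult_lt_0_compat; [apply Rpower_pos|apply exp_pos]. Qed.

Lemma Psihat_scale_pos t : 0 < Psihat_scale t.
Proof. apply Rmult_lt_0_compat; [apply Rpower_pos|apply exp_pos]. Qed.

Lemma PsiE_rescaled t x :
  Psi_scale t * PsiE d f g x0 x1 eps t x =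
  gauss_kernel d (Psi_logscale t) (Psi_mean t) (Psi_var t) x.
Proof. apply gauss_rescale. Qed.

Lemma PsihatE_rescaled t x :
  Psihat_scale t * PsihatE d f g x0 x1 eps t x =
  gauss_kernel d (Psihat_logscale t) (Psihat_mean t) (Psihat_var t) x.
Proof. apply gauss_rescale. Qed.

Let sigma2_eps_pos := sigma2_pos f g eps hsig heps.

Lemma Psi_var_pos t : 0 <= t <= 1 -> 0 < Psi_var t.
Proof.
  intros ht. pose proof (pow_lt _ 2 (alpha_pos f t)). pose proof (sigbar2_nonneg_01 f g hf hg t ht).
  unfold Psi_var. nra.
Qed.

Lemma Psihat_var_pos t : 0 <= t <= 1 -> 0 < Psihat_var t.
Proof.
  intros ht. pose proof (pow_lt _ 2 (alpha_pos f t)). pose proof (sig2_nonneg_01 f g hf hg t ht).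
  unfold Psihat_var. nra.
Qed.

Lemma is_derive_Psi_var t : 0 < t < 1 -> is_derive Psi_var t (2 * f t * Psi_var t - g t ^ 2).
Proof.
  intros ht. pose proof (alpha_pos f t).
  apply (is_derive_ext_R (fun s => alpha f s ^ 2 * (sigma2 f g eps + sigbar2 f g s)));
    [intros; unfold Psi_var; ring|].
  eapply is_derive_eq.
  - apply (is_derive_mult (fun s => alpha f s ^ 2)); [| |intros; apply Rmult_comm].
    + apply (is_derive_pow (alpha f)). now apply is_derive_alpha_interior.
    + apply (is_derive_plus (fun _ => sigma2 f g eps)); [apply is_derive_const|].
      now apply is_derive_sigbar2_interior.
  - unfold Psi_var, plus, mult, zero; simpl. field. lra.
Qed.

Lemma is_derive_Psihat_var t :
  0 < t < 1 -> is_derive Psihat_var t (2 * f t * Psihat_var t + g t ^ 2).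
Proof.
  intros ht. pose proof (alpha_pos f t).
  apply (is_derive_ext_R (fun s => alpha f s ^ 2 * (sigma2 f g eps + sig2 f g s)));
    [intros; unfold Psihat_var; ring|].
  eapply is_derive_eq.
  - apply (is_derive_mult (fun s => alpha f s ^ 2)); [| |intros; apply Rmult_comm].
    + apply (is_derive_pow (alpha f)). now apply is_derive_alpha_interior.
    + apply (is_derive_plus (fun _ => sigma2 f g eps)); [apply is_derive_const|].
      now apply is_derive_sig2_interior.
  - unfold Psihat_var, plus, mult, zero; simpl. field. lra.
Qed.

Lemma is_derive_Psi_logscale t :
  0 < t < 1 -> is_derive Psi_logscale t (INR d * (g t ^ 2 / (2 * Psi_var t))).
Proof.
  intros ht. pose proof (alpha_pos f t).
  pose proof (sigbar2_nonneg_01 f g hf hg t ltac:(lra)).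
  eapply is_derive_eq.
  - apply (is_derive_scal (fun s => ln (sigma2 f g eps + sigbar2 f g s))).
    apply (is_derive_comp ln (fun s => sigma2 f g eps + sigbar2 f g s)); [apply is_derive_ln; lra|].
    apply (is_derive_plus (fun _ => sigma2 f g eps)); [apply is_derive_const|].
    now apply is_derive_sigbar2_interior.
  - unfold Psi_var, scal, plus, zero; simpl. unfold mult; simpl.
    assert (0 < alpha f t * alpha f t) by nra. field. repeat split; nra.
Qed.

Lemma is_derive_Psihat_logscale t :
  0 < t < 1 -> is_derive Psihat_logscale t (INR d * (- f t - g t ^ 2 / (2 * Psihat_var t))).
Proof.
  intros ht. pose proof (Psihat_var_pos t ltac:(lra)).
  eapply is_derive_eq.
  - apply (is_derive_scal (fun s => ln (Psihat_var s))).
    apply (is_derive_comp ln Psihat_var); [apply is_derive_ln; lra|].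
    now apply is_derive_Psihat_var.
  - unfold scal; simpl. unfold mult; simpl. field. lra.
Qed.

Lemma is_derive_Psi_mean t i :
  0 < t < 1 -> is_derive (fun s => Psi_mean s i) t (f t * Psi_mean t i).
Proof.
  intros ht. unfold Psi_mean, vscale.
  apply (is_derive_ext_R (fun s => bvec f g x0 x1 eps i * alphabar f s)); [intros; ring|].
  eapply is_derive_eq; [apply is_derive_scal; now apply is_derive_alphabar_interior|].
  unfold scal; simpl. unfold mult; simpl. ring.
Qed.

Lemma is_derive_Psihat_mean t i :
  0 < t < 1 -> is_derive (fun s => Psihat_mean s i) t (f t * Psihat_mean t i).
Proof.
  intros ht. unfold Psihat_mean, vscale.
  apply (is_derive_ext_R (fun s => avec f g x0 x1 eps i * alpha f s)); [intros; ring|].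
  eapply is_derive_eq; [apply is_derive_scal; now apply is_derive_alpha_interior|].
  unfold scal; simpl. unfold mult; simpl. ring.
Qed.

Lemma PsiE_solves_backward :
  solves_backward d f g (fun t x => Psi_scale t * PsiE d f g x0 x1 eps t x).
Proof.
  replace (fun t x => Psi_scale t * PsiE d f g x0 x1 eps t x)
    with (fun t => gauss_kernel d (Psi_logscale t) (Psi_mean t) (Psi_var t)).
  2: { do 2 (apply functional_extensionality; intro). symmetry. apply PsiE_rescaled. }
  apply gauss_kernel_solves_backward.
  - intros t ht. apply Psi_var_pos. lra.
  - intros t i ht. now apply is_derive_Psi_mean.
  - exact is_derive_Psi_logscale.
  - exact is_derive_Psi_var.
Qed.

Lemma PsihatE_solves_forward :
  solves_forward d f g (fun t x => Psihat_scale t * PsihatE d f g x0 x1 eps t x).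
Proof.
  replace (fun t x => Psihat_scale t * PsihatE d f g x0 x1 eps t x)
    with (fun t => gauss_kernel d (Psihat_logscale t) (Psihat_mean t) (Psihat_var t)).
  2: { do 2 (apply functional_extensionality; intro). symmetry. apply PsihatE_rescaled. }
  apply gauss_kernel_solves_forward.
  - intros t ht. apply Psihat_var_pos. lra.
  - intros t i ht. now apply is_derive_Psihat_mean.
  - exact is_derive_Psihat_logscale.
  - exact is_derive_Psihat_var.
Qed.

Lemma bridge_boundary_0 : exists k, 0 < k /\ forall x,
  (Psi_scale 0 * PsiE d f g x0 x1 eps 0 x) * (Psihat_scale 0 * PsihatE d f g x0 x1 eps 0 x)
  = k * gauss d x0 (eps ^ 2) x.
Proof.
  pose proof (sigma2_precision f g eps hsig heps) as hprec.
  pose proof (alpha_pos f 1).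
  destruct (gauss_kernel_mul d (Psi_logscale 0) (Psihat_logscale 0) (Psi_mean 0) (Psihat_mean 0)
              (Psi_var 0) (Psihat_var 0) x0 (eps ^ 2)) as [k [hk hmul]].
  - apply Psi_var_pos. lra.
  - apply Psihat_var_pos. lra.
  - now apply pow_lt.
  - unfold Psi_var, Psihat_var. rewrite alpha_0, sig2_0, sigbar2_0, Rplus_comm, <- hprec.
    f_equal; f_equal; ring.
  - intros i. unfold Psi_mean, Psihat_mean, Psi_var, Psihat_var. cbv [vscale avec bvec vadd vsub].
    rewrite alpha_0, alphabar_0, sig2_0, sigbar2_0.
    rewrite <- (precision_weighted_mean _ _ _ (x0 i) (x1 i / alpha f 1) sigma2_eps_pos hsig hprec).
    field. lra.
  - exists k. split; [exact hk|]. intros x. rewrite PsiE_rescaled, PsihatE_rescaled. apply hmul.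
Qed.

Lemma bridge_boundary_1 : exists k, 0 < k /\ forall x,
  (Psi_scale 1 * PsiE d f g x0 x1 eps 1 x) * (Psihat_scale 1 * PsihatE d f g x0 x1 eps 1 x)
  = k * gauss d x1 (alpha f 1 ^ 2 * eps ^ 2) x.
Proof.
  pose proof (sigma2_precision f g eps hsig heps) as hprec.
  pose proof (alpha_pos f 1). pose proof (pow_lt _ 2 (alpha_pos f 1)).
  destruct (gauss_kernel_mul d (Psi_logscale 1) (Psihat_logscale 1) (Psi_mean 1) (Psihat_mean 1)
              (Psi_var 1) (Psihat_var 1) x1 (alpha f 1 ^ 2 * eps ^ 2)) as [k [hk hmul]].
  - apply Psi_var_pos. lra.
  - apply Psihat_var_pos. lra.
  - apply Rmult_lt_0_compat; now apply pow_lt.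
  - unfold Psi_var, Psihat_var. rewrite sigbar2_1.
    transitivity (/ alpha f 1 ^ 2 * (/ sigma2 f g eps + / (sigma2 f g eps + sig2 f g 1))).
    + field. repeat split; try lra; nra.
    + rewrite hprec. field. split; lra.
  - intros i. unfold Psi_mean, Psihat_mean, Psi_var, Psihat_var. cbv [vscale avec bvec vadd vsub].
    rewrite alphabar_1, sigbar2_1.
    transitivity (/ alpha f 1 ^ 2 *
      ((x1 i + sigma2 f g eps / sig2 f g 1 * (x1 i - alpha f 1 * x0 i)) / sigma2 f g eps
       + (alpha f 1 * x0 i + sigma2 f g eps / sig2 f g 1 * (alpha f 1 * x0 i - x1 i))
         / (sigma2 f g eps + sig2 f g 1))).
    + field. repeat split; try lra; nra.
    + rewrite (precision_weighted_mean _ _ _ _ _ sigma2_eps_pos hsig hprec). field. split; lra.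
  - exists k. split; [exact hk|]. intros x. rewrite PsiE_rescaled, PsihatE_rescaled. apply hmul.
Qed.

End Bridge.

Section VanishingNoise.
Variables (d : nat) (f g : R -> R) (x0 x1 : vec) (t : R).
Hypothesis hsig : 0 < sig2 f g 1.

Let sigma2_0 := sigma2_at_0 f g hsig.
Let hsigma2 := continuous_sigma2 f g hsig.

Lemma PsihatE_at_0 : PsihatE d f g x0 x1 0 t = Psihat0 d f g x0 t.
Proof.
  unfold PsihatE, Psihat0. rewrite sigma2_0. f_equal; [|ring].
  apply functional_extensionality. intro i. cbv [vscale avec vadd vsub].
  rewrite sigma2_0. unfold Rdiv. ring.
Qed.

Lemma PsiE_at_0 : PsiE d f g x0 x1 0 t = Psi0 d f g x1 t.
Proof.
  unfold PsiE, Psi0. rewrite sigma2_0. f_equal; [|ring].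
  apply functional_extensionality. intro i. cbv [vscale bvec vadd vsub].
  rewrite sigma2_0. unfold Rdiv. ring.
Qed.

Lemma PsihatE_vanishing_noise x : 0 < sig2 f g t ->
  filterlim (fun eps => PsihatE d f g x0 x1 eps t x) (at_right 0)
            (locally (Psihat0 d f g x0 t x)).
Proof.
  intros ht. rewrite <- PsihatE_at_0.
  apply (filterlim_at_right_0 (fun eps => PsihatE d f g x0 x1 eps t x)).
  apply continuous_gauss_param.
  - intros i _. cbv [vscale avec vadd vsub].
    apply (continuous_comp (sigma2 f g)
             (fun y => alpha f t * (x0 i + y / sig2 f g 1 * (x0 i - / alpha f 1 * x1 i))));
      [exact hsigma2|].
    apply ex_derive_continuous_R. auto_derive. lra.
  - apply (continuous_comp (sigma2 f g) (fun y => alpha f t ^ 2 * y + alpha f t ^ 2 * sig2 f g t));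
      [exact hsigma2|].
    apply ex_derive_continuous_R. auto_derive. easy.
  - rewrite sigma2_0. pose proof (pow_lt _ 2 (alpha_pos f t)). nra.
Qed.

Lemma PsiE_vanishing_noise x : 0 < sigbar2 f g t ->
  filterlim (fun eps => PsiE d f g x0 x1 eps t x) (at_right 0)
            (locally (Psi0 d f g x1 t x)).
Proof.
  intros ht. rewrite <- PsiE_at_0.
  apply (filterlim_at_right_0 (fun eps => PsiE d f g x0 x1 eps t x)).
  apply continuous_gauss_param.
  - intros i _. cbv [vscale bvec vadd vsub].
    apply (continuous_comp (sigma2 f g)
             (fun y => alphabar f t * (x1 i + y / sig2 f g 1 * (x1 i - alpha f 1 * x0 i))));
      [exact hsigma2|].
    apply ex_derive_continuous_R. auto_derive. lra.
  - apply (continuous_comp (sigma2 f g)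
             (fun y => alpha f t ^ 2 * y + alpha f t ^ 2 * sigbar2 f g t));
      [exact hsigma2|].
    apply ex_derive_continuous_R. auto_derive. easy.
  - rewrite sigma2_0. pose proof (pow_lt _ 2 (alpha_pos f t)). nra.
Qed.

End VanishingNoise.

Theorem lemma1 (d : nat) (f g : R -> R) (x0 x1 : vec)
  (hf : forall t, 0 <= t <= 1 -> continuous f t)
  (hg : forall t, 0 <= t <= 1 -> continuous g t)
  (hsig : 0 < sig2 f g 1) :
  (forall eps, 0 < eps ->
     exists c ch : R -> R,
       (forall t, 0 < c t) /\ (forall t, 0 < ch t) /\
       solves_backward d f g (fun t x => c t * PsiE d f g x0 x1 eps t x) /\
       solves_forward d f g (fun t x => ch t * PsihatE d f g x0 x1 eps t x) /\
       (exists k, 0 < k /\ forall x,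
          (c 0 * PsiE d f g x0 x1 eps 0 x) * (ch 0 * PsihatE d f g x0 x1 eps 0 x)
          = k * gauss d x0 (eps ^ 2) x) /\
       (exists k, 0 < k /\ forall x,
          (c 1 * PsiE d f g x0 x1 eps 1 x) * (ch 1 * PsihatE d f g x0 x1 eps 1 x)
          = k * gauss d x1 (alpha f 1 ^ 2 * eps ^ 2) x)) /\
  (forall t, 0 <= t <= 1 -> 0 < sig2 f g t -> forall x,
     filterlim (fun eps => PsihatE d f g x0 x1 eps t x) (at_right 0)
               (locally (Psihat0 d f g x0 t x))) /\
  (forall t, 0 <= t <= 1 -> 0 < sigbar2 f g t -> forall x,
     filterlim (fun eps => PsiE d f g x0 x1 eps t x) (at_right 0)
               (locally (Psi0 d f g x1 t x))).
Proof.
  split; [|split].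
  - intros eps heps.
    exists (Psi_scale d f g eps), (Psihat_scale d f g eps).
    split; [apply Psi_scale_pos|].
    split; [apply Psihat_scale_pos|].
    split; [now apply PsiE_solves_backward|].
    split; [now apply PsihatE_solves_forward|].
    split; [now apply bridge_boundary_0|now apply bridge_boundary_1].
  - intros t _ ht x. now apply PsihatE_vanishing_noise.
  - intros t _ ht x. now apply PsiE_vanishing_noise.
Qed.
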